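(* Let $(A,\succ,\prec)$ be a Leibniz-dendriform algebra and $r=\sum_i a_i\otimes b_i\in A\otimes A$ such that $r+\tau(r)$ is invariant. Then the following are equivalent: (a) $S(r)=0$; (b) $S_1(r)=0$; (c) $S_3(r)=0$; (d) $S_4(r)=0$; (e) $S(\tau(r))=0$, where $S(r)=\sum_{i,j}\big(a_i\otimes a_j\otimes (b_j\circ b_i)-a_i\otimes (b_i\odot a_j)\otimes b_j-(a_i\succ a_j)\otimes b_i\otimes b_j\big)$, $S_1(r)=\sum_{i,j}\big((a_i\odot a_j)\otimes b_i\otimes b_j+a_i\otimes a_j\otimes(b_i\circ b_j)+a_i\otimes(b_i\succ a_j)\otimes b_j\big)$, $S_3(r)=\sum_{i,j}\big(a_j\otimes(a_i\odot b_j)\otimes b_i+a_j\otimes a_i\otimes(b_i\succ b_j)-(a_i\circ a_j)\otimes b_i\otimes b_j\big)$, $S_4(r)=\sum_{i,j}\big(-(a_i\odot a_j)\otimes b_j\otimes b_i+a_i\otimes(b_i\circ a_j)\otimes b_j+a_i\otimes a_j\otimes(b_i\succ b_j)\big)$, and $S(\tau(r))=\sum_{i,j}\big(b_i\otimes b_j\otimes(a_j\circ a_i)-b_i\otimes(a_i\odot b_j)\otimes a_j-(b_i\succ b_j)\otimes a_i\otimes a_j\big)$.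
   Context: $\tau(a\otimes b)=b\otimes a$, $I$ is the identity. A Leibniz-dendriform algebra is a vector space $A$ with bilinear operations $\succ,\prec$ such that, with $x\circ y:=x\succ y+x\prec y$, for all $x,y,z$: $(x\circ y)\succ z=x\succ(y\succ z)-y\succ(x\succ z)$, $y\prec(x\circ z)+(x\succ y)\prec z=x\succ(y\prec z)$, $x\prec(y\circ z)=(x\prec y)\prec z+y\succ(x\prec z)$. Write $x\odot y:=x\succ y+y\prec x$, $x\star y:=x\circ y+y\circ x$; $L_*(x)y=x*y$, $R_*(x)y=y*x$; $L_\odot:=L_\succ+R_\prec$, $L_\star:=L_\circ+R_\circ$. An element $s\in A\otimes A$ is invariant if for all $x\in A$: $(L_\odot(x)\otimes I-I\otimes R_\circ(x))s=0$ and $(L_\star(x)\otimes I-I\otimes R_\prec(x))\tau(s)=0$. *)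

From HB Require Import structures.
From mathcomp Require Import all_boot all_order all_algebra.
Set Implicit Arguments. Unset Strict Implicit. Unset Printing Implicit Defensive.
Import GRing.Theory.
Local Open Scope ring_scope.

(* Tensors in A⊗A (resp. A⊗A⊗A) are handled through the universal property of the
   tensor product: a finite formal sum  Σ a_i ⊗ b_i  is zero in A⊗A iff its image
   under every bilinear map A×A → W (W any K-vector space) is zero. *)

Section LDend.
Variables (K : fieldType) (A : lmodType K).

Definition bilinear_map (W : lmodType K) (phi : A -> A -> W) : Prop :=
  (forall (c : K) x x' y, phi (c *: x + x') y = c *: phi x y + phi x' y) /\
  (forall (c : K) x y y', phi x (c *: y + y') = c *: phi x y + phi x y').

Definition trilinear_map (W : lmodType K) (phi : A -> A -> A -> W) : Prop :=
  (forall (c : K) x x' y z, phi (c *: x + x') y z = c *: phi x y z + phi x' y z) /\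
  (forall (c : K) x y y' z, phi x (c *: y + y') z = c *: phi x y z + phi x y' z) /\
  (forall (c : K) x y z z', phi x y (c *: z + z') = c *: phi x y z + phi x y z').

Variables (succ prec : A -> A -> A).

Definition circ x y := succ x y + prec x y.
Definition odot x y := succ x y + prec y x.
Definition star x y := circ x y + circ y x.

Definition is_LD_algebra : Prop :=
  bilinear_map succ /\ bilinear_map prec /\
  (forall x y z, succ (circ x y) z = succ x (succ y z) - succ y (succ x z)) /\
  (forall x y z, prec y (circ x z) + prec (succ x y) z = succ x (prec y z)) /\
  (forall x y z, prec x (circ y z) = prec (prec x y) z + succ y (prec x z)).

Definition tensor2_zero (t : forall W : lmodType K, (A -> A -> W) -> W) : Prop :=
  forall (W : lmodType K) (phi : A -> A -> W), bilinear_map phi -> t W phi = 0.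

Definition tensor3_zero (t : forall W : lmodType K, (A -> A -> A -> W) -> W) : Prop :=
  forall (W : lmodType K) (phi : A -> A -> A -> W), trilinear_map phi -> t W phi = 0.

(* τ on a formal sum r = Σ_i a_i ⊗ b_i, represented as the list of pairs (a_i, b_i) *)
Definition tau (r : seq (A * A)) : seq (A * A) := [seq (p.2, p.1) | p <- r].

Definition LD_invariant (s : seq (A * A)) : Prop :=
  forall x : A,
    tensor2_zero (fun (W : lmodType K) (phi : A -> A -> W) =>
      \sum_(p <- s) (phi (odot x p.1) p.2 - phi p.1 (circ p.2 x))) /\
    tensor2_zero (fun (W : lmodType K) (phi : A -> A -> W) =>
      \sum_(p <- tau s) (phi (star x p.1) p.2 - phi p.1 (prec p.2 x))).

(* For p = (a_i, b_i), q = (a_j, b_j). *)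
Definition S_ (r : seq (A * A)) (W : lmodType K) (phi : A -> A -> A -> W) : W :=
  \sum_(p <- r) \sum_(q <- r)
    (phi p.1 q.1 (circ q.2 p.2) - phi p.1 (odot p.2 q.1) q.2 - phi (succ p.1 q.1) p.2 q.2).

Definition S1_ (r : seq (A * A)) (W : lmodType K) (phi : A -> A -> A -> W) : W :=
  \sum_(p <- r) \sum_(q <- r)
    (phi (odot p.1 q.1) p.2 q.2 + phi p.1 q.1 (circ p.2 q.2) + phi p.1 (succ p.2 q.1) q.2).

Definition S3_ (r : seq (A * A)) (W : lmodType K) (phi : A -> A -> A -> W) : W :=
  \sum_(p <- r) \sum_(q <- r)
    (phi q.1 (odot p.1 q.2) p.2 + phi q.1 p.1 (succ p.2 q.2) - phi (circ p.1 q.1) p.2 q.2).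

Definition S4_ (r : seq (A * A)) (W : lmodType K) (phi : A -> A -> A -> W) : W :=
  \sum_(p <- r) \sum_(q <- r)
    (- phi (odot p.1 q.1) q.2 p.2 + phi p.1 (circ p.2 q.1) q.2 + phi p.1 q.1 (succ p.2 q.2)).

End LDend.

From HB Require Import structures.
From mathcomp Require Import all_boot all_order all_algebra.
Set Implicit Arguments. Unset Strict Implicit. Unset Printing Implicit Defensive.
Import GRing.Theory.
Local Open Scope ring_scope.

(* Along the chain S(r), S1(r), S4(r), S3(r), S(tau r), each tensor equals the
   next one up to sign and a permutation of the three tensor factors, modulo two
   kinds of vanishing terms: the invariance conditions of r + tau(r) tensored with
   a_i or b_i, and double sums over (i, j) that are antisymmetric in i and j.
   Since permuting the factors acts bijectively on trilinear maps, the vanishing of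
   one tensor is equivalent to the vanishing of the next. *)

Inductive zmod_expr :=
  | ZAtom of nat | ZAdd of zmod_expr & zmod_expr | ZOpp of zmod_expr | ZZero.

Section ZmodExpr.
Variables (V : zmodType) (atom : nat -> V).

Fixpoint zeval e : V :=
  match e with
  | ZAtom j => atom j | ZAdd a b => zeval a + zeval b | ZOpp a => - zeval a | ZZero => 0
  end.

Fixpoint zcoef e k : int :=
  match e with
  | ZAtom j => (j == k)%:Z | ZAdd a b => zcoef a k + zcoef b k
  | ZOpp a => - zcoef a k | ZZero => 0
  end.

Fixpoint zatom_bound e : nat :=
  match e with
  | ZAtom j => j.+1 | ZAdd a b => maxn (zatom_bound a) (zatom_bound b)
  | ZOpp a => zatom_bound a | ZZero => 0
  end.

Lemma zevalE n e : (zatom_bound e <= n)%N -> zeval e = \sum_(k < n) atom k *~ zcoef e k.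
Proof.
elim: e => [j|a IHa b IHb|a IHa|] /=.
- move=> ltjn; rewrite (bigD1 (Ordinal ltjn)) //= eqxx mulr1z big1 ?addr0 // => k.
  by rewrite -val_eqE /= eq_sym => /negbTE ->; rewrite mulr0z.
- rewrite geq_max => /andP[/IHa -> /IHb ->]; rewrite -big_split /=.
  by apply: eq_bigr => k _; rewrite mulrzDr.
- by move=> /IHa ->; rewrite -sumrN; apply: eq_bigr => k _; rewrite mulrNz.
- by move=> _; rewrite big1 // => k _; rewrite mulr0z.
Qed.

Lemma zeval_eq n e1 e2 :
  (zatom_bound e1 <= n)%N -> (zatom_bound e2 <= n)%N ->
  all (fun k => zcoef e1 k == zcoef e2 k) (iota 0 n) -> zeval e1 = zeval e2.
Proof.
move=> bd1 bd2 /allP eq12; rewrite (zevalE bd1) (zevalE bd2).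
by apply: eq_bigr => k _; rewrite (eqP (eq12 k _)) // mem_iota ltn_ord.
Qed.

End ZmodExpr.

Ltac zindex x atoms :=
  lazymatch atoms with
  | x :: _ => constr:(0%N)
  | _ :: ?l => let n := zindex x l in constr:(n.+1)
  end.

Ltac zsnoc atoms x :=
  lazymatch atoms with
  | nil => constr:([:: x])
  | ?y :: ?l => let l' := zsnoc l x in constr:(y :: l')
  end.

Ltac zreify t atoms :=
  lazymatch t with
  | @Algebra.add _ ?a ?b =>
      lazymatch zreify a atoms with (?ea, ?atoms1) =>
      lazymatch zreify b atoms1 with (?eb, ?atoms2) =>
        constr:((ZAdd ea eb, atoms2)) end end
  | @Algebra.opp _ ?a =>
      lazymatch zreify a atoms with (?ea, ?atoms1) => constr:((ZOpp ea, atoms1)) end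
  | @Algebra.zero _ => constr:((ZZero, atoms))
  | _ =>
      match constr:(tt) with
      | _ => let n := zindex t atoms in constr:((ZAtom n, atoms))
      | _ => let n := eval compute in (size atoms) in
             let atoms' := zsnoc atoms t in constr:((ZAtom n, atoms'))
      end
  end.

(* Decides equalities that hold in every abelian group, the maximal subterms
   that are not sums, opposites or zero being treated as atoms. *)
Ltac abel :=
  lazymatch goal with |- ?l = ?r :> ?V =>
  lazymatch zreify l (@nil V) with (?el, ?atoms1) =>
  lazymatch zreify r atoms1 with (?er, ?atoms) =>
  let n := eval compute in (size atoms) in
  change (zeval (nth 0 atoms) el = zeval (nth 0 atoms) er);
  apply: (@zeval_eq _ _ n); vm_compute; reflexivity
  end end end.

Definition swap12 (X T : Type) (phi : X -> X -> X -> T) x y z := phi y x z.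
Definition swap23 (X T : Type) (phi : X -> X -> X -> T) x y z := phi x z y.
Definition swap13 (X T : Type) (phi : X -> X -> X -> T) x y z := phi z y x.

Section Trilinear.
Variables (K : fieldType) (A : lmodType K) (W : lmodType K) (phi : A -> A -> A -> W).
Hypothesis phi_tri : trilinear_map phi.

Lemma trilinearD1 x x' y z : phi (x + x') y z = phi x y z + phi x' y z.
Proof. by have := phi_tri.1 1 x x' y z; rewrite !scale1r. Qed.

Lemma trilinearD2 x y y' z : phi x (y + y') z = phi x y z + phi x y' z.
Proof. by have := phi_tri.2.1 1 x y y' z; rewrite !scale1r. Qed.

Lemma trilinearD3 x y z z' : phi x y (z + z') = phi x y z + phi x y z'.
Proof. by have := phi_tri.2.2 1 x y z z'; rewrite !scale1r. Qed.

Lemma bilinear_trilinear1 x : bilinear_map (phi x).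
Proof. by split=> *; [apply: phi_tri.2.1 | apply: phi_tri.2.2]. Qed.

Lemma bilinear_trilinear3 z : bilinear_map (fun x y => phi x y z).
Proof. by split=> *; [apply: phi_tri.1 | apply: phi_tri.2.1]. Qed.

Lemma trilinear_swap12 : trilinear_map (swap12 phi).
Proof. by case: phi_tri => h1 [h2 h3]; do !split=> * /=; rewrite /swap12 ?h1 ?h2 ?h3. Qed.

Lemma trilinear_swap23 : trilinear_map (swap23 phi).
Proof. by case: phi_tri => h1 [h2 h3]; do !split=> * /=; rewrite /swap23 ?h1 ?h2 ?h3. Qed.

Lemma trilinear_swap13 : trilinear_map (swap13 phi).
Proof. by case: phi_tri => h1 [h2 h3]; do !split=> * /=; rewrite /swap13 ?h1 ?h2 ?h3. Qed.

End Trilinear.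

Lemma tensor3_zero_iff (K : fieldType) (A : lmodType K)
    (sigma : forall W : lmodType K, (A -> A -> A -> W) -> A -> A -> A -> W)
    (T U : forall W : lmodType K, (A -> A -> A -> W) -> W) :
  (forall W phi, trilinear_map phi -> trilinear_map (sigma W phi)) ->
  (forall W phi, sigma W (sigma W phi) = phi) ->
  (forall W phi, trilinear_map phi -> T W phi = 0 <-> U W (sigma W phi) = 0) ->
  tensor3_zero T <-> tensor3_zero U.
Proof.
move=> sigma_tri sigmaK TU; split=> zero W phi phi_tri.
- have sphi_tri := sigma_tri W phi phi_tri.
  by rewrite -(sigmaK W phi); apply/(TU _ _ sphi_tri); apply: zero.
- by apply/(TU _ _ phi_tri); apply: zero; apply: sigma_tri.
Qed.

Lemma double_sum_antisym (I : Type) (V : zmodType) (G : I -> I -> V) (s : seq I)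
    (F : I -> I -> V) :
  (forall p q, F p q = G p q - G q p) -> \sum_(p <- s) \sum_(q <- s) F p q = 0.
Proof.
move=> FG; under eq_bigr => p _ do under eq_bigr => q _ do rewrite FG.
by under eq_bigr => p _ do rewrite sumrB; rewrite sumrB exchange_big subrr.
Qed.
Arguments double_sum_antisym {I V} G {s F}.

Lemma eq0_of_addr_eq0 (V : zmodType) (x y : V) : y = 0 -> x + y = 0 -> x = 0.
Proof. by move=> ->; rewrite addr0. Qed.

Lemma eq0_of_subr_eq0 (V : zmodType) (x y : V) : y = 0 -> x - y = 0 -> x = 0.
Proof. by move=> ->; rewrite subr0. Qed.

Lemma oppr_eq0_iff (V : zmodType) (x : V) : - x = 0 <-> x = 0.
Proof. by split=> [/eqP|->]; rewrite ?oppr0 // oppr_eq0 => /eqP. Qed.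

Section TwistedSums.
Variables (K : fieldType) (A : lmodType K) (succ prec : A -> A -> A) (r : seq (A * A)).
Local Notation circ := (circ succ prec).
Local Notation odot := (odot succ prec).
Local Notation star := (star succ prec).

Ltac merge_double_sums :=
  repeat (rewrite -sumrB || rewrite -big_split);
  under eq_bigr => p _ do repeat (rewrite -sumrB || rewrite -big_split).

Ltac expand_trilinear tri :=
  rewrite /circ /odot /star /swap12 /swap23 /swap13;
  rewrite !(trilinearD1 tri, trilinearD2 tri, trilinearD3 tri).

Lemma S_tauE (W : lmodType K) (phi : A -> A -> A -> W) :
  S_ succ prec (tau r) phi = \sum_(p <- r) \sum_(q <- r)
    (phi p.2 q.2 (circ q.1 p.1) - phi p.2 (odot p.1 q.2) q.1 - phi (succ p.2 q.2) p.1 q.1).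
Proof. by rewrite /S_ /tau big_map; apply: eq_bigr => p _; rewrite big_map. Qed.

Lemma S3_eq_opp_S_tau_swap13 (W : lmodType K) (phi : A -> A -> A -> W) :
  trilinear_map phi -> S3_ succ prec r phi = - S_ succ prec (tau r) (swap13 phi).
Proof.
move=> tri; apply/subr0_eq; rewrite opprK /S3_ S_tauE; merge_double_sums.
apply: (double_sum_antisym (fun p q => phi (succ q.1 p.1) q.2 p.2 + phi (prec q.1 p.1) q.2 p.2)).
by move=> p q /=; expand_trilinear tri; abel.
Qed.

Lemma tensor3_zero_S3_iff_S_tau :
  tensor3_zero (S3_ succ prec r) <-> tensor3_zero (S_ succ prec (tau r)).
Proof.
apply: (@tensor3_zero_iff _ _ (fun W => @swap13 A W)) => // W phi tri.
- exact: trilinear_swap13.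
- by rewrite S3_eq_opp_S_tau_swap13 //; apply: oppr_eq0_iff.
Qed.

Hypothesis r_inv : LD_invariant succ prec (r ++ tau r).

Lemma sum_invariant_odot (W : lmodType K) (B : A * A -> A -> A -> W) (X : A * A -> A) :
  (forall p, bilinear_map (B p)) ->
  \sum_(p <- r) \sum_(q <- r)
    (B p (odot (X p) q.1) q.2 - B p q.1 (circ q.2 (X p)) +
     (B p (odot (X p) q.2) q.1 - B p q.2 (circ q.1 (X p)))) = 0.
Proof.
move=> B_bil; apply: big1 => p _.
have := (r_inv (X p)).1 W (B p) (B_bil p).
by rewrite big_cat big_map => inv_p; rewrite big_split.
Qed.

Lemma sum_invariant_star (W : lmodType K) (B : A * A -> A -> A -> W) (X : A * A -> A) :
  (forall p, bilinear_map (B p)) ->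
  \sum_(p <- r) \sum_(q <- r)
    (B p (star (X p) q.1) q.2 - B p q.1 (prec q.2 (X p)) +
     (B p (star (X p) q.2) q.1 - B p q.2 (prec q.1 (X p)))) = 0.
Proof.
move=> B_bil; apply: big1 => p _.
have := (r_inv (X p)).2 W (B p) (B_bil p).
by rewrite /tau map_cat big_cat !big_map => inv_p; rewrite big_split /= addrC.
Qed.

Lemma S1_eq_S_swap12 (W : lmodType K) (phi : A -> A -> A -> W) : trilinear_map phi ->
  S1_ succ prec r phi = S_ succ prec r (swap12 phi).
Proof.
move=> tri; apply/subr0_eq.
have bil (p : A * A) : bilinear_map (fun u v => phi u v p.2) := bilinear_trilinear3 tri p.2.
apply: (eq0_of_addr_eq0 (sum_invariant_odot (fun p => p.1) bil)).
apply: (eq0_of_subr_eq0 (sum_invariant_star (fun p => p.1) bil)).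
rewrite /S_ /S1_; merge_double_sums.
apply: (double_sum_antisym (fun p q =>
  phi (prec q.1 p.1) p.2 q.2 - phi q.1 p.1 (succ q.2 p.2) - phi q.1 p.1 (prec q.2 p.2)
  + phi (prec q.1 p.2) p.1 q.2 - phi q.1 (succ q.2 p.1) p.2 - phi q.2 (succ q.1 p.1) p.2
  - phi (succ q.1 p.1) q.2 p.2 - phi (succ q.2 p.1) q.1 p.2)).
by move=> p q /=; expand_trilinear tri; abel.
Qed.

Lemma S4_eq_opp_S1_swap23 (W : lmodType K) (phi : A -> A -> A -> W) : trilinear_map phi ->
  S4_ succ prec r phi = - S1_ succ prec r (swap23 phi).
Proof.
move=> tri; apply/subr0_eq; rewrite opprK.
have bil (p : A * A) : bilinear_map (phi p.1) := bilinear_trilinear1 tri p.1.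
have bil' (p : A * A) : bilinear_map (swap23 phi p.1) :=
  bilinear_trilinear1 (trilinear_swap23 tri) p.1.
apply: (eq0_of_subr_eq0 (sum_invariant_star (fun p => p.2) bil)).
apply: (eq0_of_subr_eq0 (sum_invariant_odot (fun p => p.2) bil')).
rewrite /S4_ /S1_; merge_double_sums.
by apply: big1 => p _; apply: big1 => q _ /=; expand_trilinear tri; abel.
Qed.

Lemma S3_eq_S4_swap12 (W : lmodType K) (phi : A -> A -> A -> W) : trilinear_map phi ->
  S3_ succ prec r phi = S4_ succ prec r (swap12 phi).
Proof.
move=> tri; apply/subr0_eq.
have bil (p : A * A) : bilinear_map (fun u v => swap12 phi u v p.2) :=
  bilinear_trilinear3 (trilinear_swap12 tri) p.2.
apply: (eq0_of_subr_eq0 (sum_invariant_odot (fun p => p.1) bil)).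
rewrite /S3_ /S4_; merge_double_sums.
apply: (double_sum_antisym (fun p q => phi (succ q.2 p.1) q.1 p.2
  + phi (prec q.2 p.1) q.1 p.2 + phi (succ q.1 p.1) q.2 p.2 + phi (prec q.1 p.1) q.2 p.2)).
by move=> p q /=; expand_trilinear tri; abel.
Qed.

Lemma tensor3_zero_S1_iff_S :
  tensor3_zero (S1_ succ prec r) <-> tensor3_zero (S_ succ prec r).
Proof.
apply: (@tensor3_zero_iff _ _ (fun W => @swap12 A W)) => // W phi tri.
- exact: trilinear_swap12.
- by rewrite S1_eq_S_swap12.
Qed.

Lemma tensor3_zero_S4_iff_S1 :
  tensor3_zero (S4_ succ prec r) <-> tensor3_zero (S1_ succ prec r).
Proof.
apply: (@tensor3_zero_iff _ _ (fun W => @swap23 A W)) => // W phi tri.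
- exact: trilinear_swap23.
- by rewrite S4_eq_opp_S1_swap23 //; apply: oppr_eq0_iff.
Qed.

Lemma tensor3_zero_S3_iff_S4 :
  tensor3_zero (S3_ succ prec r) <-> tensor3_zero (S4_ succ prec r).
Proof.
apply: (@tensor3_zero_iff _ _ (fun W => @swap12 A W)) => // W phi tri.
- exact: trilinear_swap12.
- by rewrite S3_eq_S4_swap12.
Qed.

End TwistedSums.

Theorem mainTheorem6 (K : fieldType) (A : lmodType K) (succ prec : A -> A -> A)
    (r : seq (A * A)) :
  is_LD_algebra succ prec ->
  LD_invariant succ prec (r ++ tau r) ->
  [<-> tensor3_zero (S_ succ prec r);
       tensor3_zero (S1_ succ prec r);
       tensor3_zero (S3_ succ prec r);
       tensor3_zero (S4_ succ prec r);
       tensor3_zero (S_ succ prec (tau r))].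
Proof.
move=> _ r_inv.
have [S1_S S_S1] := tensor3_zero_S1_iff_S r_inv.
have [S4_S1 S1_S4] := tensor3_zero_S4_iff_S1 r_inv.
have [S3_S4 S4_S3] := tensor3_zero_S3_iff_S4 r_inv.
have [S3_Stau Stau_S3] := tensor3_zero_S3_iff_S_tau succ prec r.
do ![split] => zero.
- exact: S_S1.
- exact: S4_S3 (S1_S4 zero).
- exact: S3_S4.
- exact: S3_Stau (S4_S3 zero).
- exact: S1_S (S4_S1 (S3_S4 (Stau_S3 zero))).
Qed.
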